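(* Let $T$ be a binary tree rooted at $O$, with all edges having activation probability $p\in(0,1]$. Let $v$ be a vertex of $T$ with two outgoing edges $e_1,e_2$. Then $$\frac{|\Lambda(e_1)|+|\Lambda(e_2)|}{\tau(e_1)+\tau(e_2)}<\frac12.$$
   Context: Setting: the stochastic search game on a finite tree $T$ rooted at $O$. Every edge has length $1$ and is active at each stage independently with the same probability $p\in(0,1]$. The searcher moves along active edges or waits, and the hider's payoff is the expected first time the searcher traverses his edge. Orient the edges away from $O$. For a vertex $v$, $T_v$ is the subtree rooted at $v$ consisting of all edges below $v$. For an edge $e=(u,w)$, $T_e$ is $\{e\}\cup T_w$, rooted at $u$. $T$ is binary if every vertex has at most two outgoing edges. Cycle time: for a vertex or edge $z$, $\tau(z)$ is the expected time needed to start at the root of $T_z$, traverse every edge of $T_z$ and return to the root, using a depth-first strategy. Equivalently, for binary trees: - $\tau(v)=0$ if $v$ has no outgoing edge; - $\tau(e)=\tau(w)+2/p$ for $e=(u,w)$; - $\tau(v)=\tau(e)$ if $v$ has exactly one outgoing edge $e$; - $\tau(v)=\tau(w_1)+\tau(w_2)+3/p+1/(1-(1-p)^2)$ if $v$ has outgoing edges to $w_1,w_2$. The function $\Lambda$ is defined recursively on rooted binary trees. Write $\Lambda(v)=\Lambda(T_v)$ and $\Lambda(e)=\Lambda(T_e)$. - $\Lambda(v)=0$ if $v$ has no outgoing edge. - If the root $r$ has a single outgoing edge $e=(r,w)$, then $\Lambda(r)=\Lambda(e)=\Lambda(w)$. In particular, a one-edge tree has $\Lambda=0$. - If $r$ has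 two outgoing edges $e_1=(r,w_1)$ and $e_2=(r,w_2)$, then $$\Lambda(r)=\frac{\tau(e_1)}{\tau(e_1)+\tau(e_2)}\Lambda(w_1)+\frac{\tau(e_2)}{\tau(e_1)+\tau(e_2)}\Lambda(w_2)+\frac12\Big(\frac1{1-(1-p)^2}-\frac1p\Big).$$ In particular, for the tree consisting of two edges at the root, $\Lambda=\frac12\big(\frac1{1-(1-p)^2}-\frac1p\big)$. *)

From Stdlib Require Import Reals.
Open Scope R_scope.

(* A rooted binary tree, described by the shape below its root:
   - BLeaf : the root has no outgoing edge;
   - BOne t : the root has exactly one outgoing edge, leading to the subtree t;
   - BTwo t1 t2 : the root has two outgoing edges, leading to t1 and t2.
   Every edge has length 1 and activation probability p. *)
Inductive btree : Type :=
| BLeaf : btree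
| BOne : btree -> btree
| BTwo : btree -> btree -> btree.

(* [subtree s t]: s is T_v for some vertex v of t (reflexive-transitive). *)
Inductive subtree : btree -> btree -> Prop :=
| sub_refl : forall t, subtree t t
| sub_one : forall s t, subtree s t -> subtree s (BOne t)
| sub_two_l : forall s t1 t2, subtree s t1 -> subtree s (BTwo t1 t2)
| sub_two_r : forall s t1 t2, subtree s t2 -> subtree s (BTwo t1 t2).

Fixpoint tau (p : R) (t : btree) : R :=
  match t with
  | BLeaf => 0
  | BOne t' => tau p t' + 2 / p
  | BTwo t1 t2 => tau p t1 + tau p t2 + 3 / p + 1 / (1 - (1 - p) ^ 2)
  end.

(* Cycle time of the edge e = (u,w), where t = T_w: tau(e) = tau(w) + 2/p. *)
Definition tau_edge (p : R) (t : btree) : R := tau p t + 2 / p.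

Fixpoint Lambda (p : R) (t : btree) : R :=
  match t with
  | BLeaf => 0
  | BOne t' => Lambda p t'
  | BTwo t1 t2 =>
      tau_edge p t1 / (tau_edge p t1 + tau_edge p t2) * Lambda p t1
      + tau_edge p t2 / (tau_edge p t1 + tau_edge p t2) * Lambda p t2
      + / 2 * (1 / (1 - (1 - p) ^ 2) - 1 / p)
  end.

Definition Lambda_edge (p : R) (t : btree) : R := Lambda p t.

(* By induction on the tree, [|Lambda(v)| <= tau(v)/2]: the two weights in the
   recursion lie in [0,1], and the constant term has absolute value at most
   [(1/(1-(1-p)^2) + 1/p)/2], which is dominated by half of what a binary vertex
   adds to the cycle time.  Since [tau(e) = tau(w) + 2/p] with [2/p > 0], the
   ratio in the theorem is then strictly below [1/2]. *)

From Stdlib Require Import Reals Lra.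
Open Scope R_scope.

Lemma Rabs_mult_weight_le (a b x : R) :
  0 < a -> 0 < b -> Rabs (a / (a + b) * x) <= Rabs x.
Proof.
  intros Ha Hb.
  assert (Hw0 : 0 <= a / (a + b)) by (apply Rlt_le, Rdiv_lt_0_compat; lra).
  assert (Hw1 : a / (a + b) <= 1).
  { apply (Rmult_le_reg_r (a + b)); [lra|]. field_simplify; lra. }
  rewrite Rabs_mult, (Rabs_pos_eq _ Hw0).
  pose proof (Rabs_pos x); nra.
Qed.

Section CycleTime.

Variable p : R.
Hypothesis hp0 : 0 < p.
Hypothesis hp1 : p <= 1.

Let inv_p_pos : 0 < 1 / p.
Proof. apply Rdiv_lt_0_compat; lra. Qed.

Let inv_two_edges_pos : 0 < 1 / (1 - (1 - p) ^ 2).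
Proof. apply Rdiv_lt_0_compat; nra. Qed.

Lemma tau_nonneg (t : btree) : 0 <= tau p t.
Proof.
  pose proof inv_p_pos; pose proof inv_two_edges_pos.
  induction t as [| t IH | t1 IH1 t2 IH2]; cbn [tau].
  - lra.
  - assert (2 / p = 2 * (1 / p)) by (field; lra). lra.
  - assert (3 / p = 3 * (1 / p)) by (field; lra). lra.
Qed.

Lemma tau_edge_pos (t : btree) : 0 < tau_edge p t.
Proof.
  unfold tau_edge; pose proof (tau_nonneg t); pose proof inv_p_pos.
  assert (2 / p = 2 * (1 / p)) by (field; lra). lra.
Qed.

Lemma Rabs_Lambda_le_half_tau (t : btree) : Rabs (Lambda p t) <= tau p t / 2.
Proof.
  pose proof inv_p_pos; pose proof inv_two_edges_pos.
  induction t as [| t IH | t1 IH1 t2 IH2]; cbn [Lambda tau].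
  - rewrite Rabs_R0; lra.
  - assert (2 / p = 2 * (1 / p)) by (field; lra). lra.
  - pose proof (tau_edge_pos t1) as He1; pose proof (tau_edge_pos t2) as He2.
    pose proof (Rabs_mult_weight_le _ _ (Lambda p t1) He1 He2) as W1.
    pose proof (Rabs_mult_weight_le _ _ (Lambda p t2) He2 He1) as W2.
    rewrite (Rplus_comm (tau_edge p t2)) in W2.
    set (d := 1 / (1 - (1 - p) ^ 2)) in *.
    assert (Hc : Rabs (/ 2 * (d - 1 / p)) <= (d + 1 / p) / 2).
    { rewrite Rabs_mult, (Rabs_pos_eq (/ 2)) by lra.
      assert (Rabs (d - 1 / p) <= d + 1 / p) by (apply Rabs_le; lra). lra. }
    assert (3 / p = 3 * (1 / p)) by (field; lra).
    eapply Rle_trans; [apply Rabs_triang|].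
    eapply Rle_trans; [apply Rplus_le_compat_r, Rabs_triang|].
    lra.
Qed.

End CycleTime.

Theorem mainTheorem7 (p : R) (hp0 : 0 < p) (hp1 : p <= 1)
  (T t1 t2 : btree) (hv : subtree (BTwo t1 t2) T) :
  (Rabs (Lambda_edge p t1) + Rabs (Lambda_edge p t2))
    / (tau_edge p t1 + tau_edge p t2) < / 2.
Proof.
  pose proof (Rabs_Lambda_le_half_tau p hp0 hp1 t1) as L1.
  pose proof (Rabs_Lambda_le_half_tau p hp0 hp1 t2) as L2.
  pose proof (tau_edge_pos p hp0 hp1 t1) as E1.
  pose proof (tau_edge_pos p hp0 hp1 t2) as E2.
  assert (Hp2 : 0 < 2 / p) by (apply Rdiv_lt_0_compat; lra).
  unfold Lambda_edge, tau_edge in *.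
  apply (Rmult_lt_reg_r (tau p t1 + 2 / p + (tau p t2 + 2 / p))); [lra|].
  unfold Rdiv at 1; rewrite Rmult_assoc, Rinv_l; lra.
Qed.
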